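(* In the setting described in the context (with $g$ unimodal and symmetric about $0$): (a) $l(\cdot)$ is nondecreasing on $(-\infty,\infty)$; (b) $u(\cdot)$ is nondecreasing on $(d_0,\infty)$; (c) if moreover $g$ is logconcave, then $u(\cdot)$ is nondecreasing on $(-\infty,d_0)$.
   Context: Let $g$ be a probability density on $\mathbb{R}$, unimodal and symmetric about $0$ (i.e. $g(z)=g(-z)$ and $g$ nonincreasing on $[0,\infty)$), with cdf $G$ and quantile function $G^{-1}(t)=\inf\{x: G(x)\ge t\}$, $t\in(0,1)$. $g$ is logconcave if $\log g$ is concave on its support. Let $X$ have density $g(x-\theta)$ with unknown $\theta\ge0$. Fix $\alpha\in(0,1)$ and set $d_0=G^{-1}\big(\tfrac{1}{1+\alpha}\big)$. The $100(1-\alpha)\%$ HPD Bayesian credible interval for $\theta$ under the prior $\pi^*(\theta)=1_{[0,\infty)}(\theta)$ is $I_{\pi^*}(x)=[l(x),u(x)]$ where $l(x)=\big\{x-G^{-1}\big(\tfrac12+\tfrac{1-\alpha}{2}G(x)\big)\big\}1_{(d_0,\infty)}(x)$, and $u(x)=x-G^{-1}(\alpha G(x))$ for $x\le d_0$, $u(x)=x+G^{-1}\big(\tfrac12+\tfrac{1-\alpha}{2}G(x)\big)$ for $x>d_0$. *)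

From Stdlib Require Import Reals Lra.
Open Scope R_scope.

(* g is a probability density on R, with cdf G:
   g >= 0, G(b) - G(a) = Riemann integral of g over [a,b] (g is monotone on
   each half-line, hence Riemann integrable on bounded intervals),
   G(x) -> 0 as x -> -oo and G(x) -> 1 as x -> +oo. *)
Definition is_density_with_cdf (g G : R -> R) : Prop :=
  (forall x, 0 <= g x) /\
  (forall a b, a <= b ->
     exists pr : Riemann_integrable g a b, RiemannInt pr = G b - G a) /\
  (forall eps, 0 < eps -> exists M, forall x, x < M -> Rabs (G x) < eps) /\
  (forall eps, 0 < eps -> exists M, forall x, M < x -> Rabs (G x - 1) < eps).

Definition symmetric_unimodal (g : R -> R) : Prop :=
  (forall z, g z = g (- z)) /\
  (forall x y, 0 <= x -> x <= y -> g y <= g x).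

Definition logconcave (g : R -> R) : Prop :=
  forall x y t, 0 < g x -> 0 < g y -> 0 <= t <= 1 ->
    0 < g (t * x + (1 - t) * y) /\
    t * ln (g x) + (1 - t) * ln (g y) <= ln (g (t * x + (1 - t) * y)).

Definition is_inf (E : R -> Prop) (m : R) : Prop :=
  (forall x, E x -> m <= x) /\ (forall b, (forall x, E x -> b <= x) -> b <= m).

Definition is_quantile (G Ginv : R -> R) : Prop :=
  forall t, 0 < t < 1 -> is_inf (fun x => t <= G x) (Ginv t).

Definition d0 (Ginv : R -> R) (alpha : R) : R := Ginv (1 / (1 + alpha)).

Definition l_fn (G Ginv : R -> R) (alpha x : R) : R :=
  if Rlt_dec (d0 Ginv alpha) x
  then x - Ginv (1 / 2 + (1 - alpha) / 2 * G x)
  else 0.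

Definition u_fn (G Ginv : R -> R) (alpha x : R) : R :=
  if Rle_dec x (d0 Ginv alpha)
  then x - Ginv (alpha * G x)
  else x + Ginv (1 / 2 + (1 - alpha) / 2 * G x).

(* Everything is reduced to properties of the cdf G.  Using Coquelicot's
   Riemann integral, G b - G a is the integral of g over [a, b]; translations
   and reflections of that integral then give:
   - G is nondecreasing, tends to 0 and 1 at -oo and +oo, hence lies in [0,1];
   - for a unimodal symmetric g: G is Lipschitz (so right-continuous and its
     quantiles are attained), G 0 = 1/2, and G is concave on [0, oo);
   - for a log-concave g: g is TP2, and integrating twice, G is log-concave in
     the form G(x + d) G(q) <= G(q + d) G(x) for q <= x, d >= 0.
   Parts (a) and (b) follow from concavity of G on [0, oo) and monotonicity
   of G and of the quantile function; part (c) follows from log-concavity of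
   G applied at q = Ginv(alpha G x). *)

From Stdlib Require Import Reals Lra.
From Coquelicot Require Import Coquelicot.
Open Scope R_scope.

Lemma RiemannInt_is_RInt (f : R -> R) (a b : R) (pr : Riemann_integrable f a b) :
  is_RInt f a b (RiemannInt pr).
Proof. rewrite <- RInt_Reals. exact (RInt_correct f a b (ex_RInt_Reals_1 f a b pr)). Qed.

Lemma is_RInt_scal_R (f : R -> R) (a b k l : R) :
  is_RInt f a b l -> is_RInt (fun t => k * f t) a b (k * l).
Proof. exact (is_RInt_scal f a b k l). Qed.

Lemma is_RInt_shift (f : R -> R) (a b c l : R) :
  is_RInt f (a + c) (b + c) l -> is_RInt (fun t => f (t + c)) a b l.
Proof.
  intro H.
  assert (H1 : is_RInt f (1 * a + c) (1 * b + c) l) by (rewrite !Rmult_1_l; exact H).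
  apply is_RInt_comp_lin in H1.
  eapply is_RInt_ext; [|exact H1].
  intros t _. change (1 * f (1 * t + c) = f (t + c)). rewrite !Rmult_1_l. reflexivity.
Qed.

Lemma is_RInt_const_bounds (f : R -> R) (a b l lo hi : R) :
  a <= b -> is_RInt f a b l -> (forall x, a < x < b -> lo <= f x <= hi) ->
  lo * (b - a) <= l <= hi * (b - a).
Proof.
  intros Hab Hf Hb. split.
  - rewrite Rmult_comm.
    apply (is_RInt_le (fun _ => lo) f a b _ _ Hab (is_RInt_const a b lo) Hf).
    intros x Hx. apply Hb, Hx.
  - rewrite Rmult_comm.
    apply (is_RInt_le f (fun _ => hi) a b _ _ Hab Hf (is_RInt_const a b hi)).
    intros x Hx. apply Hb, Hx.
Qed.

Section Cdf.
Variables g G : R -> R.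
Hypothesis Hdens : is_density_with_cdf g G.

Lemma density_nonneg (z : R) : 0 <= g z.
Proof. exact (proj1 Hdens z). Qed.

Lemma cdf_is_RInt (a b : R) : is_RInt g a b (G b - G a).
Proof.
  destruct Hdens as [_ [Hint _]].
  destruct (Rle_dec a b) as [Hab | Hba].
  - destruct (Hint a b Hab) as [pr E].
    rewrite <- E. apply RiemannInt_is_RInt.
  - destruct (Hint b a ltac:(lra)) as [pr E].
    replace (G b - G a) with (- (G a - G b)) by ring.
    rewrite <- E. exact (is_RInt_swap g a b _ (RiemannInt_is_RInt g b a pr)).
Qed.

Lemma cdf_shift_is_RInt (a b c : R) :
  is_RInt (fun t => g (t + c)) a b (G (b + c) - G (a + c)).
Proof. apply is_RInt_shift, cdf_is_RInt. Qed.

Lemma cdf_nondecreasing (a b : R) : a <= b -> G a <= G b.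
Proof.
  intro Hab.
  assert (H := is_RInt_ge_0 g a b _ Hab (cdf_is_RInt a b) (fun x _ => density_nonneg x)).
  lra.
Qed.

(* Passing to the limit at -oo (resp. +oo) in an inequality involving G M,
   using G M -> 0 (resp. G M -> 1). *)
Lemma le_of_left_tail (a b k q : R) :
  (forall M, M <= q -> a <= b + k * G M) -> a <= b.
Proof.
  intro H. apply Rnot_lt_le. intro Hba.
  set (eps := (a - b) / (Rabs k + 1)).
  assert (Hk := Rabs_pos k).
  assert (Heps : 0 < eps) by (apply Rdiv_lt_0_compat; lra).
  destruct (proj1 (proj2 (proj2 Hdens)) eps Heps) as [M0 HM0].
  set (M := Rmin q M0 - 1).
  assert (Hq : M <= q) by (unfold M; assert (Rmin q M0 <= q) by apply Rmin_l; lra).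
  assert (HM : Rabs (G M) < eps) by (apply HM0; unfold M; assert (Rmin q M0 <= M0) by apply Rmin_r; lra).
  assert (Hprod : k * G M <= Rabs k * eps).
  { apply (Rle_trans _ (Rabs (k * G M))); [apply RRle_abs|].
    rewrite Rabs_mult. apply Rmult_le_compat_l; lra. }
  assert (Hgap : (Rabs k + 1) * eps = a - b) by (unfold eps; field; lra).
  specialize (H M Hq). nra.
Qed.

Lemma le_of_right_tail (a b k q : R) :
  (forall M, q <= M -> a <= b + k * (G M - 1)) -> a <= b.
Proof.
  intro H. apply Rnot_lt_le. intro Hba.
  set (eps := (a - b) / (Rabs k + 1)).
  assert (Hk := Rabs_pos k).
  assert (Heps : 0 < eps) by (apply Rdiv_lt_0_compat; lra).
  destruct (proj2 (proj2 (proj2 Hdens)) eps Heps) as [M0 HM0].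
  set (M := Rmax q M0 + 1).
  assert (Hq : q <= M) by (unfold M; assert (q <= Rmax q M0) by apply Rmax_l; lra).
  assert (HM : Rabs (G M - 1) < eps) by (apply HM0; unfold M; assert (M0 <= Rmax q M0) by apply Rmax_r; lra).
  assert (Hprod : k * (G M - 1) <= Rabs k * eps).
  { apply (Rle_trans _ (Rabs (k * (G M - 1)))); [apply RRle_abs|].
    rewrite Rabs_mult. apply Rmult_le_compat_l; lra. }
  assert (Hgap : (Rabs k + 1) * eps = a - b) by (unfold eps; field; lra).
  specialize (H M Hq). nra.
Qed.

Lemma cdf_range (x : R) : 0 <= G x <= 1.
Proof.
  split.
  - apply (le_of_left_tail 0 (G x) (-1) x). intros M HM.
    assert (G M <= G x) by (apply cdf_nondecreasing, HM). lra.
  - apply (le_of_right_tail (G x) 1 1 x). intros M HM.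
    assert (G x <= G M) by (apply cdf_nondecreasing, HM). lra.
Qed.

Hypothesis Hsym : symmetric_unimodal g.

Lemma density_le_mode (z : R) : g z <= g 0.
Proof.
  destruct Hsym as [Hs Hm]. destruct (Rle_dec 0 z).
  - apply Hm; lra.
  - rewrite Hs. apply Hm; lra.
Qed.

Lemma cdf_lipschitz (a b : R) : a <= b -> G b - G a <= g 0 * (b - a).
Proof.
  intro Hab.
  apply (is_RInt_const_bounds g a b _ 0 (g 0) Hab (cdf_is_RInt a b)).
  intros x _. split; [apply density_nonneg | apply density_le_mode].
Qed.

(* G is right-continuous, which is what makes quantiles attained. *)
Lemma cdf_right_continuous (x eps : R) : 0 < eps ->
  exists delta, 0 < delta /\ forall y, x <= y < x + delta -> G y < G x + eps.
Proof.
  intro Heps. assert (Hg0 := density_nonneg 0).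
  exists (eps / (g 0 + 1)). split; [apply Rdiv_lt_0_compat; lra|].
  intros y Hy.
  assert (HL := cdf_lipschitz x y ltac:(lra)).
  assert (Hb : g 0 * (y - x) < eps).
  { apply (Rle_lt_trans _ ((g 0 + 1) * (y - x))); [nra|].
    replace eps with ((g 0 + 1) * (eps / (g 0 + 1))) by (field; lra).
    apply Rmult_lt_compat_l; lra. }
  lra.
Qed.

(* Symmetry of g: the mass of [-x, 0] equals that of [0, x]. *)
Lemma cdf_reflection (x : R) : G x + G (- x) = 2 * G 0.
Proof.
  assert (Href := is_RInt_comp_opp g x 0 _ (cdf_is_RInt (- x) (- 0))).
  assert (Hopp := is_RInt_scal_R g x 0 (-1) _ (cdf_is_RInt x 0)).
  assert (E : forall y, opp (g (- y)) = -1 * g y).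
  { intro y. change (- g (- y) = -1 * g y). rewrite <- (proj1 Hsym). ring. }
  apply (is_RInt_ext _ _ x 0 _ (fun y _ => E y)) in Href.
  assert (E1 := @is_RInt_unique R_CompleteNormedModule _ _ _ _ Href).
  assert (E2 := @is_RInt_unique R_CompleteNormedModule _ _ _ _ Hopp).
  rewrite Ropp_0 in E1. change (RInt (fun y => -1 * g y) x 0 = -1 * (G 0 - G x)) in E2.
  lra.
Qed.

(* Letting x -> +oo in the reflection identity gives the median. *)
Lemma cdf_at_mode : G 0 = 1 / 2.
Proof.
  assert (Hle : 2 * G 0 <= 1).
  { apply (le_of_left_tail (2 * G 0) 1 1 0). intros M _.
    rewrite <- (cdf_reflection M). assert (H := cdf_range (- M)). lra. }
  assert (Hge : 1 <= 2 * G 0).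
  { apply (le_of_right_tail 1 (2 * G 0) (-1) 0). intros M _.
    rewrite <- (cdf_reflection M). assert (H := cdf_range (- M)). lra. }
  lra.
Qed.

(* On [0,oo) the density is nonincreasing, so G is concave there: the mass of
   a window of fixed width d decreases as the window moves to the right. *)
Lemma cdf_increment_nonincreasing (a x d : R) :
  0 <= a -> a <= x -> 0 <= d -> G (x + d) - G x <= G (a + d) - G a.
Proof.
  intros Ha Hax Hd.
  assert (Hshift := cdf_shift_is_RInt a (a + d) (x - a)).
  replace (a + d + (x - a)) with (x + d) in Hshift by ring.
  replace (a + (x - a)) with x in Hshift by ring.
  apply (is_RInt_le _ _ a (a + d) _ _ ltac:(lra) Hshift (cdf_is_RInt a (a + d))).
  intros t Ht. apply (proj2 Hsym); lra.
Qed.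

End Cdf.

Section LogConcave.
Variables g G : R -> R.
Hypothesis Hdens : is_density_with_cdf g G.
Hypothesis Hlc : logconcave g.

Lemma logconcave_tp2 (r s d : R) :
  r <= s -> 0 <= d -> g r * g (s + d) <= g (r + d) * g s.
Proof.
  intros Hrs Hd.
  assert (Hpos := density_nonneg g G Hdens).
  assert (Hrhs : 0 <= g (r + d) * g s) by (apply Rmult_le_pos; apply Hpos).
  destruct (Rle_lt_or_eq_dec 0 (g r) (Hpos r)) as [Hr | Hr];
    [|rewrite <- Hr, Rmult_0_l; exact Hrhs].
  destruct (Rle_lt_or_eq_dec 0 (g (s + d)) (Hpos (s + d))) as [Hsd | Hsd];
    [|rewrite <- Hsd, Rmult_0_r; exact Hrhs].
  destruct (Req_dec d 0) as [Hd0 | Hd0].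
  { subst d. rewrite !Rplus_0_r. lra. }
  set (t := (s - r) / (s + d - r)).
  assert (Ht : 0 <= t <= 1).
  { unfold t. split.
    - apply Rdiv_le_0_compat; lra.
    - apply (Rmult_le_reg_r (s + d - r)); [lra|]. field_simplify; lra. }
  destruct (Hlc r (s + d) t Hr Hsd Ht) as [Prd L1].
  destruct (Hlc r (s + d) (1 - t) Hr Hsd ltac:(lra)) as [Ps L2].
  replace (t * r + (1 - t) * (s + d)) with (r + d) in Prd, L1 by (unfold t; field; lra).
  replace ((1 - t) * r + (1 - (1 - t)) * (s + d)) with s in Ps, L2 by (unfold t; field; lra).
  apply Rnot_lt_le. intro Hlt.
  apply ln_increasing in Hlt; [|apply Rmult_lt_0_compat; auto].
  rewrite !ln_mult in Hlt; auto. lra.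
Qed.

(* Integrating the TP2 inequality in r over (-oo, q]. *)
Lemma density_cdf_tp2 (q s d : R) :
  q <= s -> 0 <= d -> g (s + d) * G q <= g s * G (q + d).
Proof.
  intros Hqs Hd.
  apply (le_of_left_tail g G Hdens _ _ (g (s + d)) q). intros M HM.
  assert (Hint : g (s + d) * (G q - G M) <= g s * (G (q + d) - G (M + d))).
  { apply (is_RInt_le _ _ M q _ _ HM
             (is_RInt_scal_R g M q (g (s + d)) _ (cdf_is_RInt g G Hdens M q))
             (is_RInt_scal_R _ M q (g s) _ (cdf_shift_is_RInt g G Hdens M q d))).
    intros r Hr. rewrite (Rmult_comm (g s)), (Rmult_comm (g (s + d))).
    apply logconcave_tp2; lra. }
  assert (HGMd : 0 <= g s * G (M + d))
    by (apply Rmult_le_pos; [apply (density_nonneg g G Hdens) | apply (cdf_range g G Hdens)]).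
  lra.
Qed.

(* Integrating once more, in s over [q, x]: G itself is TP2, i.e. the ratio
   G(. + d) / G(.) is nonincreasing (G is log-concave). *)
Lemma cdf_tp2 (q x d : R) :
  q <= x -> 0 <= d -> G (x + d) * G q <= G (q + d) * G x.
Proof.
  intros Hqx Hd.
  assert (Hint : G q * (G (x + d) - G (q + d)) <= G (q + d) * (G x - G q)).
  { apply (is_RInt_le _ _ q x _ _ Hqx
             (is_RInt_scal_R _ q x (G q) _ (cdf_shift_is_RInt g G Hdens q x d))
             (is_RInt_scal_R g q x (G (q + d)) _ (cdf_is_RInt g G Hdens q x))).
    intros s Hs. rewrite (Rmult_comm (G q)), (Rmult_comm (G (q + d))).
    apply density_cdf_tp2; lra. }
  nra.
Qed.

End LogConcave.

Section Quantile.
Variables G Ginv : R -> R.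
Hypothesis Hq : is_quantile G Ginv.

Lemma quantile_le (t z : R) : 0 < t < 1 -> t <= G z -> Ginv t <= z.
Proof. intros Ht Hz. exact (proj1 (Hq t Ht) z Hz). Qed.

Lemma quantile_nondecreasing (t s : R) : 0 < t -> t <= s -> s < 1 -> Ginv t <= Ginv s.
Proof.
  intros Ht Hts Hs. apply (proj2 (Hq s ltac:(lra))). intros z Hz.
  apply quantile_le; lra.
Qed.

Lemma quantile_attained (t : R) :
  (forall x eps, 0 < eps ->
     exists delta, 0 < delta /\ forall y, x <= y < x + delta -> G y < G x + eps) ->
  0 < t < 1 -> t <= G (Ginv t).
Proof.
  intros Hrc Ht. apply Rnot_lt_le. intro Hlt.
  destruct (Hrc (Ginv t) (t - G (Ginv t)) ltac:(lra)) as [delta [Hdelta Hnear]].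
  apply (Rlt_not_le (Ginv t + delta) (Ginv t)); [lra|].
  apply (proj2 (Hq t Ht)). intros z Hz.
  apply Rnot_lt_le. intro Hzlt.
  assert (Ginv t <= z) by (apply quantile_le; auto).
  assert (G z < t) by (specialize (Hnear z ltac:(lra)); lra).
  lra.
Qed.

End Quantile.

Definition hpd_level (G : R -> R) (alpha z : R) : R := 1 / 2 + (1 - alpha) / 2 * G z.

Section HPDInterval.
Variables g G Ginv : R -> R.
Variable alpha : R.
Hypothesis Hdens : is_density_with_cdf g G.
Hypothesis Hsym : symmetric_unimodal g.
Hypothesis Hq : is_quantile G Ginv.
Hypothesis Halpha : 0 < alpha < 1.

Lemma cdf_quantile_attained (t : R) : 0 < t < 1 -> t <= G (Ginv t).
Proof. exact (quantile_attained G Ginv Hq t (cdf_right_continuous g G Hdens Hsym)). Qed.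

(* Beyond d0 the level lies in (1/2, 1) and below G z, because
   G z >= G d0 >= 1/(1+alpha). *)
Lemma hpd_level_bounds (z : R) : d0 Ginv alpha < z ->
  1 / 2 < hpd_level G alpha z < 1 /\ hpd_level G alpha z <= G z.
Proof.
  intro Hz. set (c0 := 1 / (1 + alpha)).
  assert (Hc0 : c0 * (1 + alpha) = 1) by (unfold c0; field; lra).
  assert (Hc0r : 0 < c0 < 1) by (split; nra).
  assert (Hd0 : c0 <= G (d0 Ginv alpha)) by (apply cdf_quantile_attained, Hc0r).
  assert (HGz : G (d0 Ginv alpha) <= G z) by (apply (cdf_nondecreasing g G Hdens); lra).
  assert (H01 := cdf_range g G Hdens z).
  unfold hpd_level. repeat split; nra.
Qed.

(* The corresponding quantile a = Ginv(level z) satisfies 0 <= a <= z (its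
   level exceeds G 0 = 1/2) and attains its level. *)
Lemma hpd_quantile_bounds (z : R) : d0 Ginv alpha < z ->
  0 <= Ginv (hpd_level G alpha z) <= z /\ hpd_level G alpha z <= G (Ginv (hpd_level G alpha z)).
Proof.
  intro Hz. destruct (hpd_level_bounds z Hz) as [Hlev HGz].
  assert (Hlev01 : 0 < hpd_level G alpha z < 1) by lra.
  split; [split|].
  - apply (proj2 (Hq _ Hlev01)). intros w Hw. apply Rnot_lt_le. intro Hw0.
    assert (G w <= G 0) by (apply (cdf_nondecreasing g G Hdens); lra).
    rewrite (cdf_at_mode g G Hdens Hsym) in *. lra.
  - apply (quantile_le G Ginv Hq); auto.
  - apply cdf_quantile_attained, Hlev01.
Qed.

Lemma l_fn_nondecreasing (x y : R) : x <= y -> l_fn G Ginv alpha x <= l_fn G Ginv alpha y.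
Proof.
  intro Hxy. unfold l_fn.
  fold (hpd_level G alpha x). fold (hpd_level G alpha y).
  destruct (Rlt_dec (d0 Ginv alpha) x) as [Hx | Hx];
    destruct (Rlt_dec (d0 Ginv alpha) y) as [Hy | Hy]; try lra.
  - destruct (hpd_quantile_bounds x Hx) as [[Ha0 Hax] HGa].
    set (a := Ginv (hpd_level G alpha x)) in *.
    destruct (hpd_level_bounds y Hy) as [Hlev _].
    assert (Hconc := cdf_increment_nonincreasing g G Hdens Hsym a x (y - x) Ha0 Hax ltac:(lra)).
    replace (x + (y - x)) with y in Hconc by ring.
    assert (HGxy : G x <= G y) by (apply (cdf_nondecreasing g G Hdens); lra).
    assert (Ginv (hpd_level G alpha y) <= a + (y - x)).
    { assert (Hinc : hpd_level G alpha y - hpd_level G alpha x <= G y - G x)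
        by (unfold hpd_level; nra).
      apply (quantile_le G Ginv Hq); lra. }
    lra.
  - destruct (hpd_quantile_bounds y Hy) as [[_ Hly] _]. lra.
Qed.

(* Part (b): beyond d0 the upper endpoint x + Ginv(level x) is nondecreasing,
   both summands being nondecreasing in x. *)
Lemma u_fn_nondecreasing_right (x y : R) : d0 Ginv alpha < x -> x <= y ->
  u_fn G Ginv alpha x <= u_fn G Ginv alpha y.
Proof.
  intros Hx Hxy. unfold u_fn.
  fold (hpd_level G alpha x). fold (hpd_level G alpha y).
  destruct (Rle_dec x (d0 Ginv alpha)); [lra|].
  destruct (Rle_dec y (d0 Ginv alpha)); [lra|].
  destruct (hpd_level_bounds x Hx) as [Hlx _].
  destruct (hpd_level_bounds y ltac:(lra)) as [Hly _].
  assert (HGxy : G x <= G y) by (apply (cdf_nondecreasing g G Hdens); lra).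
  assert (Ginv (hpd_level G alpha x) <= Ginv (hpd_level G alpha y)).
  { apply (quantile_nondecreasing G Ginv Hq); [lra| |lra]. unfold hpd_level. nra. }
  lra.
Qed.

(* Part (c): below d0 the upper endpoint is x - Ginv(alpha G x).  Writing
   q = Ginv(alpha G x), the log-concavity of G gives
   G(q + y - x) / G q >= G y / G x, hence alpha G y <= G(q + y - x). *)
Lemma u_fn_nondecreasing_left (Hlc : logconcave g) (x y : R) :
  0 < G x -> x <= y -> y < d0 Ginv alpha ->
  u_fn G Ginv alpha x <= u_fn G Ginv alpha y.
Proof.
  intros Hx Hxy Hy. unfold u_fn.
  destruct (Rle_dec x (d0 Ginv alpha)); [|lra].
  destruct (Rle_dec y (d0 Ginv alpha)); [|lra].
  assert (HGxy : G x <= G y) by (apply (cdf_nondecreasing g G Hdens); lra).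
  assert (Hx1 := cdf_range g G Hdens x). assert (Hy1 := cdf_range g G Hdens y).
  assert (Htx : 0 < alpha * G x < 1) by (split; nra).
  assert (Hty : 0 < alpha * G y < 1) by (split; nra).
  set (q := Ginv (alpha * G x)).
  assert (Hqx : q <= x) by (apply (quantile_le G Ginv Hq); [exact Htx | nra]).
  assert (HGq : alpha * G x <= G q) by (apply cdf_quantile_attained, Htx).
  assert (Hratio := cdf_tp2 g G Hdens Hlc q x (y - x) Hqx ltac:(lra)).
  replace (x + (y - x)) with y in Hratio by ring.
  assert (Hlevel : alpha * G y <= G (q + (y - x))).
  { apply (Rmult_le_reg_r (G x) _ _ Hx).
    assert (G y * (alpha * G x) <= G y * G q) by (apply Rmult_le_compat_l; lra).
    nra. }
  assert (Ginv (alpha * G y) <= q + (y - x)) by (apply (quantile_le G Ginv Hq); auto).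
  lra.
Qed.

End HPDInterval.

Theorem lemma4 (g G Ginv : R -> R) (alpha : R)
  (Hdens : is_density_with_cdf g G)
  (Hsym : symmetric_unimodal g)
  (Hq : is_quantile G Ginv)
  (Halpha : 0 < alpha < 1) :
  (* (a) l nondecreasing on R *)
  (forall x y, x <= y -> l_fn G Ginv alpha x <= l_fn G Ginv alpha y) /\
  (* (b) u nondecreasing on (d0, oo) *)
  (forall x y, d0 Ginv alpha < x -> x <= y ->
     u_fn G Ginv alpha x <= u_fn G Ginv alpha y) /\
  (* (c) if g is logconcave, u nondecreasing on (-oo, d0)
     (restricted to points where G > 0, where u is defined) *)
  (logconcave g ->
   forall x y, 0 < G x -> x <= y -> y < d0 Ginv alpha ->
     u_fn G Ginv alpha x <= u_fn G Ginv alpha y).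
Proof.
  split; [|split].
  - exact (l_fn_nondecreasing g G Ginv alpha Hdens Hsym Hq Halpha).
  - exact (u_fn_nondecreasing_right g G Ginv alpha Hdens Hsym Hq Halpha).
  - exact (u_fn_nondecreasing_left g G Ginv alpha Hdens Hsym Hq Halpha).
Qed.
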